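(* Let $(\mathcal{U},f,g,\preccurlyeq)$ be a fault-tolerance partially ordered $(m,n)$-semiring as described in the context, and let $x_1,\ldots,x_m,y_1,\ldots,y_n\in\mathcal{U}$ be disjoint components. Then (i) $x_i\preccurlyeq f(x_1,x_2,\ldots,x_m)$ for every $1\le i\le m$; (ii) $g(y_1,y_2,\ldots,y_n)\preccurlyeq y_j$ for every $1\le j\le n$.
   Context: Notation: $x_i^j$ denotes $x_i,\ldots,x_j$. $(\mathcal{U},f,g)$ is an $(m,n)$-semiring: $f$ is an associative $m$-ary and $g$ an associative $n$-ary operation on $\mathcal{U}$ (associativity of a $k$-ary $h$: $h(x_1^{i-1},h(x_i^{k+i-1}),x_{k+i}^{2k-1})=h(x_1^{j-1},h(x_j^{k+j-1}),x_{k+j}^{2k-1})$ for $1\le i\le j\le k$), and $g$ distributes over $f$ in every position. $\mathcal{U}$ is interpreted as a set of systems; $f(x_1^m)$ is the system that fails when any $x_i$ fails, $g(y_1^n)$ the system that fails only when all $y_j$ fail; elements are assumed to be disjoint components (failing independently), which imposes no further algebraic condition. $\mathbf{0}\in\mathcal{U}$ (the always-up system) is an $f$-identity ($f(\mathbf{0},\ldots,x,\ldots,\mathbf{0})=x$ in every position) and $\mathbf{1}$ (the always-down system) is a $g$-identity; moreover $g(y_1^{j-1},\mathbf{0},y_{j+1}^n)=\mathbf{0}$ and $f(x_1^{i-1},\mathbf{1},x_{i+1}^m)=\mathbf{1}$ for all arguments and positions. $\preccurlyeq$ is a partial order on $\mathcal{U}$ (''fault-tolerance partial order'') such that $(\mathcal{U},f,g,\preccurlyeq)$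 is a partially ordered $(m,n)$-semiring: $a\preccurlyeq b$ implies $f(x_1^{i-1},a,x_{i+1}^m)\preccurlyeq f(x_1^{i-1},b,x_{i+1}^m)$ and $g(y_1^{j-1},a,y_{j+1}^n)\preccurlyeq g(y_1^{j-1},b,y_{j+1}^n)$ for all arguments and all positions; and $\mathbf{0}\preccurlyeq a\preccurlyeq\mathbf{1}$ for all $a\in\mathcal{U}$. *)

From mathcomp Require Import all_boot.
Set Implicit Arguments. Unset Strict Implicit. Unset Printing Implicit Defensive.

(* A k-ary operation on U is represented as a function h : seq U -> U; only
   its values on sequences of length k are ever constrained or used.
   Positions are 0-based: position i here is position i+1 in the paper. *)

Section FT.
Variable U : Type.

Definition assoc_op (k : nat) (h : seq U -> U) : Prop :=
  forall s : seq U, size s = (2 * k - 1)%N ->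
  forall i j : nat, (i <= j)%N -> (j < k)%N ->
    h (take i s ++ h (take k (drop i s)) :: drop (i + k) s) =
    h (take j s ++ h (take k (drop j s)) :: drop (j + k) s).

Definition distrib_op (m n : nat) (f g : seq U -> U) : Prop :=
  forall (xs ys : seq U), size xs = m -> size ys = n ->
  forall j : nat, (j < n)%N ->
    g (set_nth (f xs) ys j (f xs)) = f [seq g (set_nth x ys j x) | x <- xs].

Record ft_po_semiring (m n : nat) (f g : seq U -> U) (le : U -> U -> Prop)
    (zero one : U) : Prop := {
  f_assoc : assoc_op m f;
  g_assoc : assoc_op n g;
  g_distr_f : distrib_op m n f g;
  zero_f_id : forall (x : U) (i : nat), (i < m)%N ->
      f (set_nth x (nseq m zero) i x) = x;
  one_g_id : forall (y : U) (j : nat), (j < n)%N ->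
      g (set_nth y (nseq n one) j y) = y;
  zero_g_abs : forall (ys : seq U) (j : nat), size ys = n -> (j < n)%N ->
      g (set_nth zero ys j zero) = zero;
  one_f_abs : forall (xs : seq U) (i : nat), size xs = m -> (i < m)%N ->
      f (set_nth one xs i one) = one;
  le_refl : forall a, le a a;
  le_antisym : forall a b, le a b -> le b a -> a = b;
  le_trans : forall a b c, le a b -> le b c -> le a c;
  f_mono : forall (xs : seq U) (i : nat) (a b : U), size xs = m -> (i < m)%N ->
      le a b -> le (f (set_nth a xs i a)) (f (set_nth b xs i b));
  g_mono : forall (ys : seq U) (j : nat) (a b : U), size ys = n -> (j < n)%N ->
      le a b -> le (g (set_nth a ys j a)) (g (set_nth b ys j b));
  zero_bot : forall a, le zero a;
  one_top : forall a, le a one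
}.
End FT.

From mathcomp Require Import all_boot.
Set Implicit Arguments.

(* Starting from h(e, ..., e, x_i, e, ..., e) = x_i, put the x_p back one
   position at a time; each replacement of an e by x_p can only go up, since
   e is the least element and h is monotone in every position.  Part (ii) is
   part (i) for g and the reversed order, with 1 as least element. *)

Lemma set_nth_nth_id (T : Type) (x0 y0 : T) (s : seq T) (i : nat) :
  (i < size s)%N -> set_nth x0 s i (nth y0 s i) = s.
Proof. by elim: s i => [|x s IH] [|i] //= /IH ->. Qed.

Lemma set_nth_defaultE (T : Type) (x0 x1 : T) (s : seq T) (i : nat) (y : T) :
  (i < size s)%N -> set_nth x0 s i y = set_nth x1 s i y.
Proof. by elim: s i => [|x s IH] [|i] //= /IH ->. Qed.

Section MonotoneOpWithLeastUnit.

Variables (U : Type) (le : U -> U -> Prop) (h : seq U -> U) (k : nat) (e : U).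

Hypothesis le_refl : forall a, le a a.
Hypothesis le_trans : forall a b c, le a b -> le b c -> le a c.
Hypothesis e_least : forall a, le e a.
Hypothesis e_unit : forall (x : U) (i : nat), (i < k)%N ->
  h (set_nth x (nseq k e) i x) = x.
Hypothesis h_mono : forall (xs : seq U) (i : nat) (a b : U),
  size xs = k -> (i < k)%N -> le a b ->
  le (h (set_nth a xs i a)) (h (set_nth b xs i b)).

Variables (xs : seq U) (i : nat).
Hypothesis size_xs : size xs = k.
Hypothesis lt_i_k : (i < k)%N.

Definition fill (p : nat) : seq U :=
  mkseq (fun j => if (j < p) || (j == i) then nth e xs j else e) k.

Lemma size_fill p : size (fill p) = k.
Proof. exact: size_mkseq. Qed.

Lemma nth_fill p j : (j < k)%N ->
  nth e (fill p) j = if (j < p) || (j == i) then nth e xs j else e.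
Proof. exact: nth_mkseq. Qed.

Lemma fill0 : fill 0 = set_nth e (nseq k e) i (nth e xs i).
Proof.
apply: (@eq_from_nth _ e).
  by rewrite size_fill size_set_nth size_nseq (maxn_idPr _).
move=> j; rewrite size_fill => lt_j_k.
by rewrite nth_fill // nth_set_nth /= nth_nseq lt_j_k; case: eqP => [->|].
Qed.

Lemma fill_all : fill k = xs.
Proof.
apply: (@eq_from_nth _ e); first by rewrite size_fill size_xs.
by move=> j; rewrite size_fill => lt_j_k; rewrite nth_fill // lt_j_k.
Qed.

Lemma fillS p : (p < k)%N ->
  set_nth e (fill p) p (nth e xs p) = fill p.+1.
Proof.
move=> lt_p_k; apply: (@eq_from_nth _ e).
  by rewrite size_set_nth !size_fill (maxn_idPr _).
move=> j; rewrite size_set_nth size_fill (maxn_idPr _) // => lt_j_k.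
rewrite nth_set_nth /= !nth_fill //; case: eqP => [->|/eqP ne_jp].
  by rewrite ltnSn.
by rewrite [(j < p.+1)%N]ltnS [(j <= p)%N]leq_eqVlt (negbTE ne_jp).
Qed.

Lemma nth_le_fill p : (p <= k)%N -> le (nth e xs i) (h (fill p)).
Proof.
elim: p => [_|p IH lt_p_k].
  by rewrite fill0 (set_nth_defaultE _ (nth e xs i)) ?size_nseq // e_unit.
apply: le_trans (IH (ltnW lt_p_k)) _.
have le_p : le (nth e (fill p) p) (nth e xs p).
  by rewrite nth_fill //; case: ifP.
have := @h_mono _ _ _ _ (size_fill p) lt_p_k le_p.
by rewrite set_nth_nth_id ?size_fill // (set_nth_defaultE _ e) ?size_fill // fillS.
Qed.

Lemma nth_le_op : le (nth e xs i) (h xs).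
Proof. by have := nth_le_fill k (leqnn k); rewrite fill_all. Qed.

End MonotoneOpWithLeastUnit.

Theorem lemma3 (U : Type) (m n : nat) (f g : seq U -> U) (le : U -> U -> Prop)
    (zero one : U) :
  ft_po_semiring m n f g le zero one ->
  forall (xs ys : seq U), size xs = m -> size ys = n ->
  (forall i : nat, (i < m)%N -> le (nth zero xs i) (f xs)) /\
  (forall j : nat, (j < n)%N -> le (g ys) (nth zero ys j)).
Proof.
move=> H xs ys size_xs size_ys; split=> i lt_i.
  exact: (@nth_le_op U le f m zero (le_refl H) (le_trans H) (zero_bot H)
    (zero_f_id H) (f_mono H) xs i size_xs lt_i).
have ge_trans a b c : le b a -> le c b -> le c a.
  by move=> ba cb; exact: le_trans H c b a cb ba.
have g_antitone zs j a b : size zs = n -> (j < n)%N -> le b a ->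
    le (g (set_nth b zs j b)) (g (set_nth a zs j a)).
  exact: @g_mono _ _ _ _ _ _ _ _ H zs j b a.
rewrite (set_nth_default one) ?size_ys //.
exact: (@nth_le_op U (fun a b => le b a) g n one (le_refl H) ge_trans
  (one_top H) (one_g_id H) g_antitone ys i size_ys lt_i).
Qed.
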